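(* Let $d\ge 0$ be an integer, let $G$ be any finite $d$-regular graph and let $\lambda>0$. Then \[ \frac{1}{|V(G)|}\log P_G(\lambda) \le \frac{1}{d+1}\log P_{K_{d+1}}(\lambda), \] equivalently $P_G(\lambda)\le P_{K_{d+1}}(\lambda)^{|V(G)|/(d+1)}$, with equality if and only if $G$ is a disjoint union of copies of $K_{d+1}$.
   Context: Graphs are finite, simple and have at least one vertex. A Widom--Rowlinson configuration on a graph $G$ is a map $\chi:V(G)\to\{0,1,2\}$ such that no vertex coloured $1$ is adjacent to a vertex coloured $2$. Let $\Omega(G)$ be the set of such configurations and $X_i(\chi)$ the number of vertices coloured $i$. The Widom--Rowlinson partition function is $P_G(\lambda)=\sum_{\chi\in\Omega(G)}\lambda^{X_1(\chi)+X_2(\chi)}$. $K_{d+1}$ denotes the complete graph on $d+1$ vertices. *)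

From mathcomp Require Import all_boot all_order all_algebra.
From mathcomp Require Import all_classical all_reals all_analysis.
Set Implicit Arguments. Unset Strict Implicit. Unset Printing Implicit Defensive.
Import Order.TTheory GRing.Theory Num.Theory.
Local Open Scope ring_scope.

Definition simple_graph (T : finType) (e : rel T) : Prop :=
  symmetric e /\ irreflexive e.

Definition regular (T : finType) (e : rel T) (d : nat) : Prop :=
  forall x : T, #|[set y | e x y]| = d.

Definition wr_config (T : finType) (e : rel T) (chi : {ffun T -> 'I_3}) : bool :=
  [forall x, forall y, e x y ==> ~~ ((val (chi x) == 1%N) && (val (chi y) == 2%N))].

Definition wr_occupied (T : finType) (chi : {ffun T -> 'I_3}) : nat :=
  #|[set x | val (chi x) != 0%N]|.

Definition wr_pf (R : realType) (T : finType) (e : rel T) (lambda : R) : R :=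
  \sum_(chi : {ffun T -> 'I_3} | wr_config e chi) lambda ^+ wr_occupied chi.

Definition complete_rel (n : nat) : rel 'I_n := fun i j => i != j.

Definition disjoint_union_of_cliques (T : finType) (e : rel T) (d : nat) : Prop :=
  exists (I : finType) (f : T -> I * 'I_d.+1),
    bijective f /\
    forall x y, e x y = ((f x).1 == (f y).1) && ((f x).2 != (f y).2).

From mathcomp Require Import all_boot all_order all_algebra.
From mathcomp Require Import all_classical all_reals all_analysis.
From mathcomp Require Import ring lra.
Set Implicit Arguments. Unset Strict Implicit. Unset Printing Implicit Defensive.
Import Order.TTheory GRing.Theory Num.Theory.
Local Open Scope ring_scope.

(* Record only the set A of vertices coloured 1: a vertex outside A can be
   coloured 2 exactly when its closed neighbourhood N[u] misses A.  Writing
   lambda = mu^(d+1) and charging each vertex of A to the d+1 closed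
   neighbourhoods containing it gives P_G(lambda) = sum_A prod_u f_u(A), where
   f_u(A) = 1 + lambda if A misses N[u] and mu^|A :&: N[u]| otherwise, so f_u
   only depends on the coordinates of A in N[u].  Every coordinate lies in
   exactly d+1 of these neighbourhoods, hence Finner's generalised Hoelder
   inequality on the cube {0,1}^V bounds the average of prod_u f_u by the
   product of the L^(d+1)-norms of the f_u; this is exactly the inequality
   P_G^(d+1) <= P_K^|V|.  Finner's inequality is proved by integrating out one
   coordinate at a time with the two-term Hoelder inequality
   prod x + prod y <= prod (x^k + y^k)^(1/k), which is strict unless (x_u) and
   (y_u) are proportional.  An edge xy with N[x] <> N[y] yields such a
   non-proportional pair, whereas if adjacent vertices always have equal closed
   neighbourhoods then these are the cliques of a disjoint union of copies of
   K_(d+1), and P_G factorises over the copies. *)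

Lemma leif_pXn2r (R : realDomainType) n (x y : R) C : (0 < n)%N ->
  0 <= x -> 0 <= y -> x ^+ n <= y ^+ n ?= iff C -> x <= y ?= iff C.
Proof.
move=> n_gt0 x_ge0 y_ge0 [le_xy eq_xy]; split; first by rewrite -(ler_pXn2r n_gt0).
by rewrite -eq_xy eqrXn2.
Qed.

Lemma exprn_le_of_double_le (R : numFieldType) n (a b c : R) : 0 <= a ->
  a *+ 2 <= b -> b ^+ n <= 2 ^+ n * c -> a ^+ n <= c.
Proof.
move=> a_ge0 le_ab le_bc; rewrite -(ler_pM2l (exprn_gt0 n (ltr0Sn _ 1))).
rewrite -exprMn mulr_natl; apply: le_trans le_bc; apply: lerXn2r => //.
  by rewrite nnegrE mulrn_wge0.
by rewrite nnegrE (le_trans _ le_ab) ?mulrn_wge0.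
Qed.

Lemma exprn_lt_of_double_lt (R : numFieldType) n (a b c : R) : (0 < n)%N -> 0 <= a ->
  a *+ 2 < b -> b ^+ n <= 2 ^+ n * c -> a ^+ n < c.
Proof.
move=> n_gt0 a_ge0 lt_ab le_bc; rewrite -(ltr_pM2l (exprn_gt0 n (ltr0Sn _ 1))).
rewrite -exprMn mulr_natl; apply: lt_le_trans le_bc.
by rewrite ltrXn2r ?mulrn_wge0 // -lt0n.
Qed.

Section NatRoot.
Variable R : realType.

Definition rootn (k : nat) (s : R) : R := s `^ k%:R^-1.

Lemma rootnK k s : (0 < k)%N -> 0 <= s -> rootn k s ^+ k = s.
Proof.
move=> k_gt0 s_ge0; rewrite /rootn -powR_mulrn ?powR_ge0 // -powRrM mulVf ?powRr1 //.
by rewrite pnatr_eq0 -lt0n.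
Qed.

Lemma rootn_gt0 k s : 0 < s -> 0 < rootn k s.
Proof. exact: powR_gt0. Qed.

End NatRoot.

Section TwoTermHolder.
Variables (R : realType) (I : finType) (J : {set I}).
Let k := #|J|.
Hypothesis card_J_gt0 : (0 < k)%N.

Lemma prod_add_leif1 (a b : I -> R) :
  {in J, forall u, 0 <= a u} -> {in J, forall u, 0 <= b u} ->
  {in J, forall u, a u ^+ k + b u ^+ k = 1} ->
  \prod_(u in J) a u + \prod_(u in J) b u <= 1
    ?= iff [forall u in J, forall v in J, a u ^+ k == a v ^+ k]
        && [forall u in J, forall v in J, b u ^+ k == b v ^+ k].
Proof.
move=> a_ge0 b_ge0 ab1.
have AGM (c : I -> R) : {in J, forall u, 0 <= c u} ->
    \prod_(u in J) c u <= (\sum_(u in J) c u ^+ k) / k%:R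
      ?= iff [forall u in J, forall v in J, c u ^+ k == c v ^+ k].
  move=> c_ge0; apply: (@leif_pXn2r _ k) => //.
  - exact: prodr_ge0.
  - by rewrite divr_ge0 // sumr_ge0 // => u /c_ge0 /(exprn_ge0 k).
  by rewrite -prodrXl; apply: leif_AGM => u /c_ge0 /(exprn_ge0 k).
have := leifD (AGM a a_ge0) (AGM b b_ge0).
rewrite -mulrDl -big_split /= [\sum_(u in J) _](eq_bigr (fun=> 1)) // sumr_const divff //.
by rewrite pnatr_eq0 -lt0n.
Qed.

Variables (x y : I -> R).
Hypotheses (x_gt0 : {in J, forall u, 0 < x u}) (y_gt0 : {in J, forall u, 0 < y u}).
Let r u := rootn k (x u ^+ k + y u ^+ k).

Let r_gt0 u : u \in J -> 0 < r u.
Proof. by move=> uJ; rewrite rootn_gt0 // addr_gt0 ?exprn_gt0 ?x_gt0 ?y_gt0. Qed.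

Let holder_leif1 :
  \prod_(u in J) (x u / r u) + \prod_(u in J) (y u / r u) <= 1
    ?= iff [forall u in J, forall v in J, (x u / r u) ^+ k == (x v / r v) ^+ k]
        && [forall u in J, forall v in J, (y u / r u) ^+ k == (y v / r v) ^+ k].
Proof.
apply: prod_add_leif1 => u uJ;
  have xu := x_gt0 uJ; have yu := y_gt0 uJ; have ru := r_gt0 uJ.
- exact: divr_ge0 (ltW xu) (ltW ru).
- exact: divr_ge0 (ltW yu) (ltW ru).
have s_gt0 : 0 < x u ^+ k + y u ^+ k by rewrite addr_gt0 ?exprn_gt0.
by rewrite !expr_div_n -mulrDl rootnK ?divff ?gt_eqF ?ltW.
Qed.

Let prod_add_scale :
  \prod_(u in J) x u + \prod_(u in J) y u
  = (\prod_(u in J) (x u / r u) + \prod_(u in J) (y u / r u)) * \prod_(u in J) r u.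
Proof.
have r_neq0 : \prod_(u in J) r u != 0 by rewrite gt_eqF // prodr_gt0.
by rewrite mulrDl !prodf_div !divfK.
Qed.

Lemma prod_add_le_prod_rootn :
  \prod_(u in J) x u + \prod_(u in J) y u
    <= \prod_(u in J) rootn k (x u ^+ k + y u ^+ k).
Proof.
rewrite prod_add_scale ger_pMl ?prodr_gt0 //; exact: holder_leif1.
Qed.

Lemma prod_add_lt_prod_rootn u1 u2 : u1 \in J -> u2 \in J ->
  x u1 * y u2 != x u2 * y u1 ->
  \prod_(u in J) x u + \prod_(u in J) y u
    < \prod_(u in J) rootn k (x u ^+ k + y u ^+ k).
Proof.
move=> u1J u2J; apply: contra_neqT.
rewrite prod_add_scale gtr_pMl ?prodr_gt0 // (lt_leif holder_leif1) negbK.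
case/andP => /forall_inP/(_ u1 u1J)/forall_inP/(_ u2 u2J) ex.
move=> /forall_inP/(_ u2 u2J)/forall_inP/(_ u1 u1J) ey.
have x1 := x_gt0 u1J; have x2 := x_gt0 u2J; have r1 := r_gt0 u1J.
have y1 := y_gt0 u1J; have y2 := y_gt0 u2J; have r2 := r_gt0 u2J.
rewrite (eqrXn2 card_J_gt0 (ltW (divr_gt0 x1 r1)) (ltW (divr_gt0 x2 r2))) in ex.
rewrite (eqrXn2 card_J_gt0 (ltW (divr_gt0 y2 r2)) (ltW (divr_gt0 y1 r1))) in ey.
have -> : x u1 * y u2 = (x u1 / r u1) * (y u2 / r u2) * (r u1 * r u2).
  by field; rewrite !gt_eqF.
by rewrite (eqP ex) (eqP ey); field; rewrite !gt_eqF.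
Qed.

End TwoTermHolder.

Section SetAverage.
Variables (R : realType) (T : finType).

Definition set_avg (F : {set T} -> R) : R := #|{set T}|%:R^-1 * \sum_A F A.

Lemma card_set_gt0 : (0 < #|{set T}|)%N.
Proof. by apply/card_gt0P; exists [set: T]. Qed.

Lemma set_avg_cst c : set_avg (fun=> c) = c.
Proof.
rewrite /set_avg sumr_const -[c *+ _]mulr_natr mulrCA mulVf ?mulr1 //.
by rewrite pnatr_eq0 -lt0n card_set_gt0.
Qed.

Lemma set_avg_ge0 F : (forall A, 0 <= F A) -> 0 <= set_avg F.
Proof. by move=> F_ge0; rewrite mulr_ge0 ?invr_ge0 ?ler0n ?sumr_ge0. Qed.

Lemma ler_set_avg F G : (forall A, F A <= G A) -> set_avg F <= set_avg G.
Proof.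
by move=> leFG; rewrite ler_wpM2l ?invr_ge0 ?ler0n // ler_sum.
Qed.

Lemma ltr_set_avg F G A0 : (forall A, F A <= G A) -> F A0 < G A0 ->
  set_avg F < set_avg G.
Proof.
move=> leFG ltFG; rewrite ltr_pM2l ?invr_gt0 ?ltr0n ?card_set_gt0 //.
by rewrite [ltLHS](bigD1 A0) // [ltRHS](bigD1 A0) //= ltr_leD // ler_sum.
Qed.

Definition toggle (j : T) (A : {set T}) := if j \in A then A :\ j else j |: A.

Lemma toggleK j : involutive (toggle j).
Proof.
move=> A; rewrite {2}/toggle; case: ifP => jA; rewrite /toggle !inE eqxx /=.
  by rewrite finset.setD1K.
by rewrite finset.setU1K ?jA.
Qed.

Lemma set_avg_setD1_setU1 j F :
  set_avg (fun A => F (A :\ j) + F (j |: A)) = set_avg F *+ 2.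
Proof.
rewrite /set_avg -mulrnAr; congr (_ * _).
transitivity (\sum_A (F A + F (toggle j A))).
  apply: eq_bigr => A _; rewrite /toggle; case: ifP => jA.
    by rewrite addrC; congr (F _ + _); apply/finset.setUidPr; rewrite finset.sub1set.
  by congr (F _ + _); apply/finset.setDidPl; rewrite disjoint_sym disjoints1 jA.
rewrite big_split /= mulr2n; congr (_ + _).
by rewrite [RHS](reindex_inj (inv_inj (toggleK j))).
Qed.

Definition local (S : {set T}) (phi : {set T} -> R) :=
  forall A B, A :&: S = B :&: S -> phi A = phi B.

Lemma localS (S S' : {set T}) phi : S \subset S' -> local S phi -> local S' phi.
Proof.
by move=> sSS' phiS A B eqAB; apply: phiS; rewrite -(finset.setIidPr sSS') !finset.setIA eqAB.
Qed.

End SetAverage.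

Section FinnerInequality.
Variables (R : realType) (T : finType) (N : T -> {set T}) (k : nat).
Hypothesis k_gt0 : (0 < k)%N.
Hypothesis card_cover : forall j, #|[set u | j \in N u]| = k.

Definition integrate_out (f : T -> {set T} -> R) (j u : T) (A : {set T}) : R :=
  if j \in N u then rootn k (f u (A :\ j) ^+ k + f u (j |: A) ^+ k) else f u A.

Section IntegrateOut.
Variables (f : T -> {set T} -> R) (j : T).
Hypothesis f_gt0 : forall u A, 0 < f u A.

Lemma integrate_out_gt0 u A : 0 < integrate_out f j u A.
Proof. by rewrite /integrate_out; case: ifP => // _; rewrite rootn_gt0 ?addr_gt0 ?exprn_gt0. Qed.

Lemma integrate_out_local (D : {set T}) : j \in D ->
  (forall u, local (N u :&: D) (f u)) ->
  forall u, local (N u :&: (D :\ j)) (integrate_out f j u).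
Proof.
move=> jD f_loc u A B /setP eqAB; rewrite /integrate_out; case: ifP => jNu;
  [congr (rootn k (_ ^+ k + _ ^+ k))|]; apply: f_loc; apply/setP => z;
  move: (eqAB z); rewrite !inE; case: (eqVneq z j) => [->|] //=; by rewrite jNu ?jD.
Qed.

Lemma prod_set_avg_integrate_out :
  \prod_u set_avg (fun A => integrate_out f j u A ^+ k)
  = 2 ^+ k * \prod_u set_avg (fun A => f u A ^+ k).
Proof.
transitivity (\prod_u ((if j \in N u then 2 else 1) * set_avg (fun A => f u A ^+ k))).
  apply: eq_bigr => u _; rewrite /integrate_out; case: ifP => _; last by rewrite mul1r.
  rewrite mulr_natl -(set_avg_setD1_setU1 j); congr (set_avg _); apply/funext => A.
  by rewrite rootnK // addr_ge0 // exprn_ge0 // ltW.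
rewrite big_split /= -big_mkcond /= prodr_const -(card_cover j).
by congr (_ ^+ _ * _); apply: eq_card => u; rewrite inE.
Qed.

Hypothesis f_local : forall u, local (N u) (f u).

Let J := [set u | j \in N u].

Let split_cover (g : T -> R) :
  \prod_u g u = \prod_(u in J) g u * \prod_(u | u \notin J) g u.
Proof. exact: bigID. Qed.

Let off_cover A :
  \prod_(u | u \notin J) f u (A :\ j) = \prod_(u | u \notin J) integrate_out f j u A /\
  \prod_(u | u \notin J) f u (j |: A) = \prod_(u | u \notin J) integrate_out f j u A.
Proof.
have f_off u : j \notin N u -> f u (A :\ j) = f u A /\ f u (j |: A) = f u A.
  move=> /negbTE jNu; split; apply: f_local; apply/setP => z; rewrite !inE;
    by case: (eqVneq z j) => [->|] /=; rewrite ?jNu ?andbF.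
by split; apply: eq_bigr => u; rewrite inE /integrate_out => jNu;
  case: (f_off u jNu) => fD fU; rewrite (negbTE jNu) ?fD ?fU.
Qed.

Let on_cover A :
  \prod_(u in J) integrate_out f j u A
  = \prod_(u in J) rootn #|J| (f u (A :\ j) ^+ #|J| + f u (j |: A) ^+ #|J|).
Proof. by apply: eq_bigr => u; rewrite inE /integrate_out card_cover => ->. Qed.

Let card_J_gt0 : (0 < #|J|)%N. Proof. by rewrite card_cover. Qed.

Let f_gt0_in B : {in J, forall u, 0 < f u B}.
Proof. by move=> u _; apply: f_gt0. Qed.

Let off_cover_gt0 A : 0 < \prod_(u | u \notin J) integrate_out f j u A.
Proof. by apply: prodr_gt0 => u _; apply: integrate_out_gt0. Qed.

Lemma prod_add_le_integrate_out A :
  \prod_u f u (A :\ j) + \prod_u f u (j |: A) <= \prod_u integrate_out f j u A.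
Proof.
rewrite !split_cover; case: (off_cover A) => -> ->.
rewrite -mulrDl ler_pM2r ?off_cover_gt0 // on_cover.
exact: (prod_add_le_prod_rootn card_J_gt0 (f_gt0_in (A :\ j)) (f_gt0_in (j |: A))).
Qed.

Lemma prod_add_lt_integrate_out A u1 u2 : j \in N u1 -> j \in N u2 ->
  f u1 (A :\ j) * f u2 (j |: A) != f u2 (A :\ j) * f u1 (j |: A) ->
  \prod_u f u (A :\ j) + \prod_u f u (j |: A) < \prod_u integrate_out f j u A.
Proof.
move=> ju1 ju2 neq; rewrite !split_cover; case: (off_cover A) => -> ->.
rewrite -mulrDl ltr_pM2r ?off_cover_gt0 // on_cover.
by apply: (prod_add_lt_prod_rootn card_J_gt0 (f_gt0_in (A :\ j)) (f_gt0_in (j |: A)) _ _ neq);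
  rewrite inE.
Qed.

Lemma set_avg_prod_integrate_out_le :
  set_avg (fun A => \prod_u f u A) *+ 2 <= set_avg (fun A => \prod_u integrate_out f j u A).
Proof.
rewrite -(set_avg_setD1_setU1 j); apply: ler_set_avg => A.
exact: prod_add_le_integrate_out.
Qed.

Lemma set_avg_prod_integrate_out_lt A0 u1 u2 : j \in N u1 -> j \in N u2 ->
  f u1 (A0 :\ j) * f u2 (j |: A0) != f u2 (A0 :\ j) * f u1 (j |: A0) ->
  set_avg (fun A => \prod_u f u A) *+ 2 < set_avg (fun A => \prod_u integrate_out f j u A).
Proof.
move=> ju1 ju2 neq; rewrite -(set_avg_setD1_setU1 j); apply: (ltr_set_avg (A0 := A0)).
  by move=> A; apply: prod_add_le_integrate_out.
exact: prod_add_lt_integrate_out neq.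
Qed.

End IntegrateOut.

Let prod_set_avg_ge0 (f : T -> {set T} -> R) : (forall u A, 0 < f u A) ->
  0 <= set_avg (fun A => \prod_u f u A).
Proof. by move=> f_gt0; apply: set_avg_ge0 => A; apply: prodr_ge0 => u _; apply: ltW. Qed.

Lemma finner_on (D : {set T}) (f : T -> {set T} -> R) :
  (forall u A, 0 < f u A) -> (forall u, local (N u :&: D) (f u)) ->
  set_avg (fun A => \prod_u f u A) ^+ k <= \prod_u set_avg (fun A => f u A ^+ k).
Proof.
move: {2}#|D| (erefl #|D|) => n; elim: n D f => [|n IHn] D f cardD f_gt0 f_loc.
  have f_cst u A : f u A = f u finset.set0.
    by apply: f_loc; move/eqP: cardD; rewrite cards_eq0 => /eqP ->; rewrite !finset.setI0.
  have avg_cst (F : {set T} -> R) : (forall A, F A = F finset.set0) -> set_avg F = F finset.set0.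
    by move=> F_cst; rewrite -[RHS](set_avg_cst T); congr set_avg; apply/funext.
  rewrite avg_cst => [|A]; last by apply: eq_bigr => u _; rewrite f_cst.
  rewrite -prodrXl le_eqVlt eq_sym; apply/orP; left; apply/eqP/eq_bigr => u _.
  by rewrite avg_cst // => A; rewrite f_cst.
have /card_gt0P[j jD] : (0 < #|D|)%N by rewrite cardD.
have cardDj : #|D :\ j| = n by move: cardD; rewrite (cardsD1 j) jD add1n => -[].
have f_locN u : local (N u) (f u) := localS (subsetIl _ _) (f_loc u).
apply: (exprn_le_of_double_le (prod_set_avg_ge0 f_gt0)
  (set_avg_prod_integrate_out_le j f_gt0 f_locN)).
rewrite -(prod_set_avg_integrate_out j f_gt0).
exact: IHn _ (integrate_out f j) cardDj (integrate_out_gt0 j f_gt0)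
  (integrate_out_local jD f_loc).
Qed.

Lemma finner (f : T -> {set T} -> R) :
  (forall u A, 0 < f u A) -> (forall u, local (N u) (f u)) ->
  set_avg (fun A => \prod_u f u A) ^+ k <= \prod_u set_avg (fun A => f u A ^+ k).
Proof.
move=> f_gt0 f_loc; apply: (finner_on (D := [set: T])) => // u.
by rewrite finset.setIT.
Qed.

Lemma finner_lt (f : T -> {set T} -> R) j A0 u1 u2 :
  (forall u A, 0 < f u A) -> (forall u, local (N u) (f u)) ->
  j \in N u1 -> j \in N u2 ->
  f u1 (A0 :\ j) * f u2 (j |: A0) != f u2 (A0 :\ j) * f u1 (j |: A0) ->
  set_avg (fun A => \prod_u f u A) ^+ k < \prod_u set_avg (fun A => f u A ^+ k).
Proof.
move=> f_gt0 f_loc ju1 ju2 neq.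
apply: (exprn_lt_of_double_lt k_gt0 (prod_set_avg_ge0 f_gt0)
  (set_avg_prod_integrate_out_lt f_gt0 f_loc ju1 ju2 neq)).
rewrite -(prod_set_avg_integrate_out j f_gt0).
apply: (finner_on (D := [set: T] :\ j)) (integrate_out_gt0 _ f_gt0) _.
by apply: integrate_out_local (finset.in_setT j) _ => u; rewrite finset.setIT.
Qed.

End FinnerInequality.

Section SubsetSums.
Variables (R : realType) (U : finType).

Lemma prod_nat_bool (b : U -> bool) : \prod_i ((b i)%:R : R) = [forall i, b i]%:R.
Proof.
have [/fintype.forallP b_true | /forallPn[i /negbTE b_i]] := boolP [forall i, b i].
  by apply: big1 => i _; rewrite b_true.
by rewrite (bigD1 i) //= b_i mul0r.
Qed.

Lemma sum_set_prod (a : U -> R) :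
  \sum_(B : {set U}) \prod_(x in B) a x = \prod_x (1 + a x).
Proof.
have -> : \prod_x (1 + a x) = \prod_x \sum_(b : bool) (if b then a x else 1).
  by apply: eq_bigr => x _; rewrite big_bool /= addrC.
rewrite bigA_distr_bigA /= (reindex (fun g : {ffun U -> bool} => [set x | g x])) /=.
  by apply: eq_bigr => g _; rewrite big_mkcond; apply: eq_bigr => x _; rewrite inE.
exists (fun B : {set U} => [ffun x => x \in B]) => [g _|B _].
  by apply/ffunP => x; rewrite ffunE inE.
by apply/setP => x; rewrite inE ffunE.
Qed.

Lemma prod_if (S : {set U}) (a b : R) :
  \prod_x (if x \in S then a else b) = a ^+ #|S| * b ^+ #|~: S|.
Proof.
rewrite (bigID (mem S)) /=; congr (_ * _).
  by rewrite -prodr_const; apply: eq_bigr => x ->.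
rewrite -prodr_const (eq_bigl (fun x => x \in ~: S)) => [|x]; last by rewrite !inE.
by apply: eq_bigr => x; rewrite inE => /negbTE ->.
Qed.

Lemma sum_set_exprn_card_setI (S : {set U}) (lam c : R) :
  \sum_(B : {set U}) (lam ^+ #|B :&: S| + (B :&: S == finset.set0)%:R * c)
   = 2 ^+ #|~: S| * ((1 + lam) ^+ #|S| + c).
Proof.
have prod_mem (B : {set U}) (a b : R) :
    \prod_(x in B) (if x \in S then a else b)
    = \prod_x (if x \in B then if x \in S then a else b else 1).
  by rewrite big_mkcond.
rewrite big_split /= mulrDr; congr (_ + _).
  under eq_bigr => B _ do rewrite -prodr_const big_mkcond.
  transitivity (\sum_(B : {set U}) \prod_(x in B) (if x \in S then lam else 1)).
    by apply: eq_bigr => B _; rewrite prod_mem; apply: eq_bigr => x _; rewrite inE; case: (x \in B).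
  rewrite sum_set_prod (eq_bigr (fun x => if x \in S then 1 + lam else 2)) ?prod_if 1?mulrC //.
  by move=> x _; case: (x \in S).
rewrite -mulr_suml; congr (_ * _).
transitivity (\sum_(B : {set U}) \prod_(x in B) (if x \in S then 0 else 1) : R).
  apply: eq_bigr => B _; rewrite prod_mem -[RHS]/(\prod_x _).
  rewrite (eq_bigr (fun x => (x \notin B :&: S)%:R)) ?prod_nat_bool; last first.
    by move=> x _; rewrite inE; case: (x \in B); case: (x \in S).
  congr ((nat_of_bool _)%:R); apply/idP/fintype.forallP => [/eqP -> x|B_S]; first by rewrite inE.
  by apply/eqP/setP => x; rewrite (negbTE (B_S x)) inE.
rewrite sum_set_prod (eq_bigr (fun x => if x \in S then 1 else 2)) ?prod_if ?expr1n ?mul1r //.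
by move=> x _; case: (x \in S); rewrite ?addr0.
Qed.

End SubsetSums.

Section WidomRowlinsonLocal.
Variables (R : realType) (T : finType) (e : rel T) (lam : R).
Hypothesis e_simple : simple_graph e.

Definition cnbhd (x : T) : {set T} := x |: [set y | e x y].

Lemma cnbhd_sym x y : (x \in cnbhd y) = (y \in cnbhd x).
Proof. by case: e_simple => e_sym _; rewrite !inE eq_sym e_sym. Qed.

Lemma cnbhd_refl x : x \in cnbhd x.
Proof. by rewrite !inE eqxx. Qed.

Definition wr_term (chi : {ffun T -> 'I_3}) : R :=
  \prod_x (if val (chi x) != 0%N then lam else 1).

Lemma wr_pfE : wr_pf e lam = \sum_chi (wr_config e chi)%:R * wr_term chi.
Proof.
rewrite /wr_pf big_mkcond; apply: eq_bigr => chi _.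
case: ifP => _; rewrite ?mul1r ?mul0r //.
by rewrite /wr_occupied -prodr_const big_mkcond; apply: eq_bigr => x _; rewrite inE.
Qed.

Definition colour_fits (A : {set T}) (x : T) (c : 'I_3) : bool :=
  ((val c == 1%N) == (x \in A)) && ((val c == 2%N) ==> (A :&: cnbhd x == finset.set0)).

Lemma colour_fitsE (A : {set T}) (chi : {ffun T -> 'I_3}) :
  [forall x, colour_fits A x (chi x)] =
  (A == [set x | val (chi x) == 1%N]) && wr_config e chi.
Proof.
case: e_simple => e_sym _; apply/idP/idP.
  move/fintype.forallP => fits.
  have -> : A = [set x | val (chi x) == 1%N].
    by apply/setP => x; rewrite inE; case/andP: (fits x) => /eqP <-.
  rewrite eqxx; apply/fintype.forallP => x; apply/fintype.forallP => y.
  apply/implyP => exy; apply/negP => /andP[c1 c2].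
  case/andP: (fits y) => _ /implyP /(_ c2) /eqP A_y.
  have : x \in A :&: cnbhd y.
    by rewrite !inE -(eqP (proj1 (andP (fits x)))) c1 e_sym exy orbT.
  by rewrite A_y inE.
case/andP => /eqP -> chi_ok; apply/fintype.forallP => x; rewrite /colour_fits inE eqxx /=.
apply/implyP => c2; apply/eqP/setP => z; rewrite !inE.
apply/negP => /andP[cz /orP[/eqP zx | exz]]; first by rewrite zx (eqP c2) in cz.
move/fintype.forallP: chi_ok => /(_ z) /fintype.forallP /(_ x).
by rewrite e_sym exz cz c2.
Qed.

Definition wr_weight (A : {set T}) (x : T) : R :=
  if x \in A then lam else if A :&: cnbhd x == finset.set0 then 1 + lam else 1.

Lemma wr_pf_colour1 : wr_pf e lam = \sum_A \prod_x wr_weight A x.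
Proof.
pose fit_term A x (c : 'I_3) : R :=
  (colour_fits A x c)%:R * (if val c != 0%N then lam else 1).
have config_term chi :
    (wr_config e chi)%:R * wr_term chi = \sum_A \prod_x fit_term A x (chi x).
  rewrite (eq_bigr (fun A =>
      ((A == [set x | val (chi x) == 1%N]) && wr_config e chi)%:R * wr_term chi)); last first.
    by move=> A _; rewrite big_split /= prod_nat_bool colour_fitsE.
  case: (wr_config e chi); last by rewrite mul0r big1 // => A _; rewrite andbF mul0r.
  rewrite (bigD1 [set x | val (chi x) == 1%N]) //= eqxx big1 ?addr0 // => A /negbTE ->.
  by rewrite mul0r.
rewrite wr_pfE (eq_bigr _ (fun chi _ => config_term chi)) exchange_big /=.
apply: eq_bigr => A _; rewrite -(bigA_distr_bigA (fit_term A)) /=.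
apply: eq_bigr => x _; rewrite !big_ord_recl big_ord0 /fit_term /colour_fits /wr_weight /=.
by case: (x \in A); case: (A :&: cnbhd x == finset.set0); rewrite /=; lra.
Qed.

End WidomRowlinsonLocal.

Lemma wr_pf_complete (R : realType) n (lam : R) :
  wr_pf (@complete_rel n) lam = (1 + lam) ^+ n + ((1 + lam) ^+ n - 1).
Proof.
have K_simple : simple_graph (@complete_rel n).
  by split => [x y|x]; rewrite /complete_rel ?eqxx // eq_sym.
have cnbhdT x : cnbhd (@complete_rel n) x = [set: 'I_n].
  by apply/setP => z; rewrite !inE /complete_rel eq_sym orbN.
rewrite (wr_pf_colour1 lam K_simple) (eq_bigr (fun A => lam ^+ #|A :&: [set: 'I_n]| +
    (A :&: [set: 'I_n] == finset.set0)%:R * ((1 + lam) ^+ n - 1))) => [|A _].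
  by rewrite sum_set_exprn_card_setI finset.setCT cards0 mul1r cardsT card_ord.
rewrite /wr_weight finset.setIT; under eq_bigr do rewrite cnbhdT finset.setIT.
have [->|A_neq0] := eqVneq A finset.set0; last by rewrite mul0r addr0 prod_if expr1n mulr1.
rewrite (eq_bigr (fun=> 1 + lam)) => [|x _]; last by rewrite inE.
by rewrite prodr_const cards0 -[X in _ ^+ X]/#|'I_n| card_ord expr0 mul1r; lra.
Qed.

Section RegularGraph.
Variables (R : realType) (T : finType) (e : rel T) (d : nat) (lam : R).
Hypotheses (e_simple : simple_graph e) (e_regular : regular e d).

Lemma card_cnbhd x : #|cnbhd e x| = d.+1.
Proof. by case: e_simple => _ e_irr; rewrite cardsU1 e_regular inE e_irr. Qed.

Lemma card_cnbhd_mem j : #|[set u | j \in cnbhd e u]| = d.+1.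
Proof.
by rewrite -(card_cnbhd j); apply: eq_card => u; rewrite inE (cnbhd_sym e_simple).
Qed.

Definition wr_local (mu : R) (u : T) (A : {set T}) : R :=
  if A :&: cnbhd e u == finset.set0 then 1 + lam else mu ^+ #|A :&: cnbhd e u|.

Lemma wr_pf_local mu : mu ^+ d.+1 = lam ->
  wr_pf e lam = \sum_A \prod_u wr_local mu u A.
Proof.
move=> mu_root; rewrite (wr_pf_colour1 lam e_simple); apply: eq_bigr => A _.
transitivity (\prod_x ((if x \in A then lam else 1) *
    (if A :&: cnbhd e x == finset.set0 then 1 + lam else 1))).
  apply: eq_bigr => x _; rewrite /wr_weight; case: ifP => xA; last by rewrite mul1r.
  have : x \in A :&: cnbhd e x by rewrite inE xA cnbhd_refl.
  by case: eqP => [->|_]; rewrite ?inE // mulr1.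
transitivity (\prod_u ((if A :&: cnbhd e u == finset.set0 then 1 + lam else 1) *
    mu ^+ #|A :&: cnbhd e u|)).
  rewrite !big_split /= mulrC; congr (_ * _).
  transitivity (\prod_u \prod_a (if a \in A :&: cnbhd e u then mu else 1)).
    rewrite exchange_big /=; apply: eq_bigr => a _.
    have [aA|aNA] := boolP (a \in A); last first.
      by rewrite big1 // => u _; rewrite inE (negbTE aNA).
    rewrite -mu_root -(card_cnbhd_mem a) -prodr_const big_mkcond.
    by apply: eq_bigr => u _; rewrite !inE aA.
  by apply: eq_bigr => u _; rewrite -prodr_const [RHS]big_mkcond.
apply: eq_bigr => u _; rewrite /wr_local; case: eqP => [->|_]; last by rewrite mul1r.
by rewrite cards0 expr0 mulr1.
Qed.

Hypothesis lam_gt0 : 0 < lam.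

Let mu := rootn d.+1 lam.

Let mu_root : mu ^+ d.+1 = lam.
Proof. by rewrite rootnK // ltW. Qed.

Let wr_local_gt0 u A : 0 < wr_local mu u A.
Proof.
by rewrite /wr_local; case: ifP => _; rewrite ?addr_gt0 ?exprn_gt0 ?rootn_gt0.
Qed.

Let wr_local_local u : local (cnbhd e u) (wr_local mu u).
Proof. by move=> A B eqAB; rewrite /wr_local eqAB. Qed.

Let card_set_T : (#|{set T}|%:R : R) = 2 ^+ #|T|.
Proof. by rewrite -[#|{set T}|]cardsT -powersetT card_powerset cardsT natrX. Qed.

Let set_avg_prod_exprn :
  set_avg (fun A => \prod_u wr_local mu u A) ^+ d.+1
  = wr_pf e lam ^+ d.+1 / 2 ^+ (#|T| * d.+1).
Proof.
by rewrite /set_avg -(wr_pf_local mu_root) card_set_T mulrC exprMn exprVn -exprM.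
Qed.

Let prod_set_avg_exprn :
  \prod_u set_avg (fun A => wr_local mu u A ^+ d.+1)
  = wr_pf (@complete_rel d.+1) lam ^+ #|T| / 2 ^+ (#|T| * d.+1).
Proof.
rewrite mulnC exprM -expr_div_n -prodr_const; apply: eq_bigr => u _.
rewrite /set_avg card_set_T wr_pf_complete.
rewrite (eq_bigr (fun A => lam ^+ #|A :&: cnbhd e u| +
    (A :&: cnbhd e u == finset.set0)%:R * ((1 + lam) ^+ d.+1 - 1))) => [|A _].
  rewrite sum_set_exprn_card_setI card_cnbhd -(cardsC (cnbhd e u)) card_cnbhd exprD.
  by field; rewrite !expf_eq0 pnatr_eq0 !andbF.
rewrite /wr_local; have [->|_] := eqVneq (A :&: cnbhd e u) finset.set0.
  by rewrite cards0 expr0 mul1r; lra.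
by rewrite mul0r addr0 -exprM mulnC exprM mu_root.
Qed.

Lemma wr_pf_exprn_le : wr_pf e lam ^+ d.+1 <= wr_pf (@complete_rel d.+1) lam ^+ #|T|.
Proof.
have := finner (ltn0Sn d) card_cnbhd_mem wr_local_gt0 wr_local_local.
by rewrite set_avg_prod_exprn prod_set_avg_exprn ler_pM2r ?invr_gt0 ?exprn_gt0.
Qed.

Let wr_local_not_proportional x y a :
  x \in cnbhd e y -> a \in cnbhd e x -> a \notin cnbhd e y ->
  wr_local mu x ([set a] :\ x) * wr_local mu y (x |: [set a])
  != wr_local mu y ([set a] :\ x) * wr_local mu x (x |: [set a]).
Proof.
move=> xNy aNx aNy; have xa : x != a by apply: contraNneq aNy => <-.
have set1I b (B : {set T}) : [set b] :&: B = if b \in B then [set b] else finset.set0.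
  case: ifP => bB; first by apply/finset.setIidPl; rewrite finset.sub1set.
  by apply/disjoint_setI0; rewrite disjoints1 bB.
have -> : [set a] :\ x = [set a].
  by apply/finset.setDidPl; rewrite disjoints1 finset.in_set1 eq_sym.
(* The four factors are [mu], [mu], [1 + lam] and [mu ^+ 2]. *)
rewrite /wr_local !finset.setIUl !set1I cnbhd_refl xNy aNx (negbTE aNy) finset.setU0.
rewrite -!cards_eq0 cardsU1 !cards1 cards0 finset.in_set1 (negbTE xa) /=.
have mu2_gt0 : 0 < mu ^+ 2 by rewrite exprn_gt0 ?rootn_gt0.
apply/eqP; rewrite expr1 -expr2 -[(1 + 1)%N]/2%N => eq_mu2.
have : lam * mu ^+ 2 = 0 by lra.
by apply/eqP; rewrite mulf_neq0 ?gt_eqF.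
Qed.

Lemma wr_pf_exprn_lt x y : e x y -> cnbhd e x != cnbhd e y ->
  wr_pf e lam ^+ d.+1 < wr_pf (@complete_rel d.+1) lam ^+ #|T|.
Proof.
move=> exy nxy; have [a aNx aNy] : exists2 a, a \in cnbhd e x & a \notin cnbhd e y.
  by apply/subsetPn; apply: contra nxy => sub; rewrite eqEcard sub !card_cnbhd leqnn.
have xNy : x \in cnbhd e y by rewrite (cnbhd_sym e_simple) !inE exy orbT.
have := finner_lt (ltn0Sn d) card_cnbhd_mem wr_local_gt0 wr_local_local (cnbhd_refl e x) xNy
  (wr_local_not_proportional xNy aNx aNy).
by rewrite set_avg_prod_exprn prod_set_avg_exprn ltr_pM2r ?invr_gt0 ?exprn_gt0.
Qed.

End RegularGraph.

Section CliqueDecomposition.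
Variables (T : finType) (e : rel T) (d : nat).
Hypotheses (e_simple : simple_graph e) (e_regular : regular e d).
Hypothesis cnbhd_edge : forall x y, e x y -> cnbhd e x = cnbhd e y.

Definition clique := {S : {set T} | [exists x, S == cnbhd e x]}.

Lemma cnbhd_is_clique x : [exists y, cnbhd e x == cnbhd e y].
Proof. by apply/existsP; exists x. Qed.

Definition clique_of (x : T) : clique := exist _ (cnbhd e x) (cnbhd_is_clique x).

Definition clique_coord (x : T) : clique * 'I_d.+1 :=
  (clique_of x, inord (index x (enum (cnbhd e x)))).

Definition clique_vertex (x0 : T) (p : clique * 'I_d.+1) : T :=
  nth x0 (enum (val p.1)) p.2.

Lemma size_enum_cnbhd x : size (enum (cnbhd e x)) = d.+1.
Proof. by rewrite -cardE (card_cnbhd e_simple e_regular). Qed.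

Lemma index_cnbhd_lt x : (index x (enum (cnbhd e x)) < d.+1)%N.
Proof. by rewrite -(size_enum_cnbhd x) index_mem mem_enum cnbhd_refl. Qed.

Lemma cnbhd_mem w z : z \in cnbhd e w -> cnbhd e z = cnbhd e w.
Proof. by rewrite !inE => /orP[/eqP -> // | ewz]; rewrite (cnbhd_edge ewz). Qed.

Lemma clique_coordK x0 : cancel clique_coord (clique_vertex x0).
Proof.
move=> x; rewrite /clique_vertex /= inordK ?index_cnbhd_lt //.
by rewrite nth_index // mem_enum cnbhd_refl.
Qed.

Lemma clique_vertexK x0 : cancel (clique_vertex x0) clique_coord.
Proof.
case=> [[S S_clique] i]; rewrite /clique_vertex /=.
case/existsP: (S_clique) => w /eqP S_w.
have size_S : size (enum S) = d.+1 by rewrite S_w size_enum_cnbhd.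
set z := nth x0 (enum S) i.
have zS : z \in S by rewrite -mem_enum mem_nth // size_S.
have cnbhd_z : cnbhd e z = S by rewrite S_w (cnbhd_mem (_ : z \in cnbhd e w)) -?S_w.
congr (_, _); first exact: val_inj.
apply: val_inj; rewrite /= cnbhd_z inordK; last by rewrite -size_S index_mem mem_enum.
by rewrite index_uniq ?enum_uniq ?size_S.
Qed.

Lemma clique_coord_edge x y :
  e x y = ((clique_coord x).1 == (clique_coord y).1)
          && ((clique_coord x).2 != (clique_coord y).2).
Proof.
case: e_simple => _ e_irr.
rewrite -[_.1 == _]val_eqE -[_.2 == _]val_eqE /= !inordK ?index_cnbhd_lt //.
apply/idP/andP => [exy | [/eqP N_xy ne_idx]].
  rewrite -(cnbhd_edge exy) eqxx; split => //; apply/eqP => eq_idx.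
  have x_in : x \in enum (cnbhd e x) by rewrite mem_enum cnbhd_refl.
  have y_in : y \in enum (cnbhd e x) by rewrite mem_enum (cnbhd_edge exy) cnbhd_refl.
  have x_y : x = y by rewrite -(nth_index x x_in) eq_idx nth_index.
  by rewrite x_y e_irr in exy.
have : y \in cnbhd e x by rewrite N_xy cnbhd_refl.
rewrite !inE => /orP[/eqP y_x | //]; by rewrite y_x N_xy eqxx in ne_idx.
Qed.

Lemma disjoint_union_of_cliques_of_cnbhd_edge : (0 < #|T|)%N ->
  disjoint_union_of_cliques e d.
Proof.
case/card_gt0P => x0 _; exists clique, clique_coord; split; last exact: clique_coord_edge.
by exists (clique_vertex x0); [exact: clique_coordK | exact: clique_vertexK].
Qed.

End CliqueDecomposition.

Lemma wr_pf_ge1 (R : realType) (T : finType) (e : rel T) (lam : R) :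
  0 <= lam -> 1 <= wr_pf e lam.
Proof.
move=> lam_ge0; pose chi0 : {ffun T -> 'I_3} := [ffun=> ord0].
have chi0_config : wr_config e chi0.
  by apply/fintype.forallP => x; apply/fintype.forallP => y; rewrite !ffunE /= implybT.
have chi0_empty : wr_occupied chi0 = 0%N.
  by apply/eqP; rewrite cards_eq0; apply/eqP/setP => x; rewrite !inE ffunE.
rewrite /wr_pf (bigD1 chi0) //= chi0_empty expr0 lerDl sumr_ge0 // => chi _.
exact: exprn_ge0.
Qed.

Lemma wr_pf_disjoint_union (R : realType) (T I : finType) (e : rel T) n (lam : R)
    (f : T -> I * 'I_n) : bijective f ->
  (forall x y, e x y = ((f x).1 == (f y).1) && ((f x).2 != (f y).2)) ->
  wr_pf e lam = wr_pf (@complete_rel n) lam ^+ #|I|.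
Proof.
case=> g fK gK f_edge.
rewrite -prodr_const (wr_pfE e lam) (eq_bigr _ (fun i _ => wr_pfE _ _)) bigA_distr_bigA /=.
pose glue (Psi : {ffun I -> {ffun 'I_n -> 'I_3}}) : {ffun T -> 'I_3} :=
  [ffun x => Psi (f x).1 (f x).2].
rewrite (reindex glue) /=; last first.
  exists (fun chi : {ffun T -> 'I_3} => [ffun i => [ffun j => chi (g (i, j))]]).
    by move=> Psi _; apply/ffunP => i; apply/ffunP => j; rewrite !ffunE gK.
  by move=> chi _; apply/ffunP => x; rewrite !ffunE -surjective_pairing fK.
apply: eq_bigr => Psi _; rewrite big_split /= prod_nat_bool; congr (_ * _).
  congr ((nat_of_bool _)%:R); apply/idP/fintype.forallP => [Psi_ok i | Psi_ok].
    apply/fintype.forallP => a; apply/fintype.forallP => b; apply/implyP => ab.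
    move/fintype.forallP: Psi_ok => /(_ (g (i, a))) /fintype.forallP /(_ (g (i, b))).
    by rewrite f_edge !gK /= eqxx (ab : a != b) !ffunE !gK.
  apply/fintype.forallP => x; apply/fintype.forallP => y; apply/implyP.
  rewrite f_edge => /andP[/eqP same_copy ne].
  move: (Psi_ok (f x).1) => /fintype.forallP /(_ (f x).2) /fintype.forallP /(_ (f y).2).
  by rewrite /complete_rel ne !ffunE same_copy.
rewrite /wr_term pair_big /= (reindex g) /=; last by exists f => p _; [exact: gK | exact: fK].
by apply: eq_bigr => p _; rewrite ffunE gK.
Qed.

Lemma lnXn_div (R : realType) (P : R) n k : 0 < P -> (0 < n)%N -> (0 < k)%N ->
  n%:R^-1 * ln P = ln (P ^+ k) / (n * k)%:R.
Proof.
move=> P_gt0 n_gt0 k_gt0; rewrite lnXn // natrM -mulr_natr; field.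
by rewrite !pnatr_eq0 -!lt0n n_gt0 k_gt0.
Qed.

Lemma ler_ln_div (R : realType) (P F : R) n k : 0 < P -> 0 < F -> (0 < n)%N -> (0 < k)%N ->
  (n%:R^-1 * ln P <= k%:R^-1 * ln F) = (P ^+ k <= F ^+ n).
Proof.
move=> P_gt0 F_gt0 n_gt0 k_gt0; rewrite (lnXn_div P_gt0 n_gt0 k_gt0) (lnXn_div F_gt0 k_gt0 n_gt0).
rewrite mulnC ler_pM2r ?invr_gt0 ?ltr0n ?muln_gt0 ?n_gt0 ?k_gt0 //.
by rewrite ler_ln // posrE exprn_gt0.
Qed.

Lemma eq_ln_div (R : realType) (P F : R) n k : 0 < P -> 0 < F -> (0 < n)%N -> (0 < k)%N ->
  (n%:R^-1 * ln P = k%:R^-1 * ln F) <-> (P ^+ k = F ^+ n).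
Proof.
move=> P_gt0 F_gt0 n_gt0 k_gt0; rewrite (lnXn_div P_gt0 n_gt0 k_gt0) (lnXn_div F_gt0 k_gt0 n_gt0).
have nk_neq0 : ((k * n)%:R : R) != 0 by rewrite pnatr_eq0 -lt0n muln_gt0 n_gt0 k_gt0.
rewrite mulnC; split => [/(mulIf (invr_neq0 nk_neq0))|->] //.
by apply: ln_inj; rewrite posrE exprn_gt0.
Qed.

Theorem corollary1 (R : realType) (d : nat) (T : finType) (e : rel T) (lambda : R) :
  simple_graph e -> (0 < #|T|)%N -> regular e d -> 0 < lambda ->
  (#|T|%:R^-1 * ln (wr_pf e lambda)
     <= (d.+1)%:R^-1 * ln (wr_pf (@complete_rel d.+1) lambda))
  /\
  (#|T|%:R^-1 * ln (wr_pf e lambda)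
     = (d.+1)%:R^-1 * ln (wr_pf (@complete_rel d.+1) lambda)
   <-> disjoint_union_of_cliques e d).
Proof.
move=> e_simple T_gt0 e_regular lam_gt0.
have wr_pf_gt0 (U : finType) (r : rel U) : 0 < wr_pf r lambda.
  exact: lt_le_trans ltr01 (wr_pf_ge1 r (ltW lam_gt0)).
rewrite ler_ln_div ?eq_ln_div //; split; first exact: wr_pf_exprn_le.
split => [eq_pf | [I [f [f_bij f_edge]]]].
  apply: disjoint_union_of_cliques_of_cnbhd_edge => // x y exy.
  apply/eqP/negPn/negP => N_xy.
  by move: (wr_pf_exprn_lt e_simple e_regular lam_gt0 exy N_xy); rewrite eq_pf ltxx.
rewrite (wr_pf_disjoint_union lambda f_bij f_edge) -exprM.
by rewrite (bij_eq_card f_bij) card_prod card_ord mulnC.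
Qed.
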